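(* Let $q$ be a prime power and let $C\subseteq\mathrm{GF}(q^m)^n$ be a (linear or nonlinear) code with $n\le m$, $|C|=q^{mk}$ for an integer $1\le k\le n$, and minimum rank distance $d_{\mathrm R}=n-k+1$; let $r=n-k$. For an integer $u$ let $A_u$ be the number of codewords of $C$ of rank $u$. Then for every $u$ with $d_{\mathrm R}\le u\le n$, $$A_u\le{n\brack u}A(m,u-r).$$
   Context: For $\mathbf x=(x_0,\dots,x_{n-1})\in\mathrm{GF}(q^m)^n$, $\mathrm{rk}(\mathbf x)$ is the dimension over $\mathrm{GF}(q)$ of the $\mathrm{GF}(q)$-span of $x_0,\dots,x_{n-1}$; the minimum rank distance of $C$ is the minimum of $\mathrm{rk}(\mathbf c-\mathbf d)$ over distinct codewords. $A(m,0)=1$, $A(m,j)=\prod_{i=0}^{j-1}(q^m-q^i)$ for $j\ge1$, and ${n\brack u}=A(n,u)/A(u,u)$. *)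

From HB Require Import structures.
From mathcomp Require Import all_boot all_order all_algebra all_field.
Set Implicit Arguments. Unset Strict Implicit. Unset Printing Implicit Defensive.
Import GRing.Theory.
Local Open Scope ring_scope.

(* Setting: F = GF(q) is a finite field (q = #|F|), L = GF(q^m) is a field
   extension of F of degree m.  Vectors of L^n are row vectors 'rV[L]_n. *)

Definition rk (F : finFieldType) (L : fieldExtType F) (n : nat) (x : 'rV[L]_n) : nat :=
  \dim <<[seq x ord0 i | i <- enum 'I_n]>>%VS.

Definition Acount (q m j : nat) : nat := (\prod_(i < j) (q ^ m - q ^ i))%N.

Definition gbinom (q n u : nat) : nat := (Acount q n u %/ Acount q u u)%N.

Definition weight_count (F : finFieldType) (L : fieldExtType F) (n : nat)
  (C : seq 'rV[L]_n) (u : nat) : nat := count (fun c => rk c == u) C.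

From HB Require Import structures.
From mathcomp Require Import all_boot all_order all_algebra all_field.
From mathcomp Require Import zify.
Import GRing.Theory.
Import VectorInternalTheory.
Local Open Scope ring_scope.

Set Implicit Arguments.
Unset Strict Implicit.
Unset Printing Implicit Defensive.

(* Write a word x as the n x m matrix M over GF(q) of the coordinates of its
   entries, so that rk x = rank M.  For a codeword of rank u let V be the
   column space of M; the left kernel K of M depends only on V and has
   dimension n - u.  Choosing, for each V, u - r rows W_V that meet K
   trivially, W_V M has full row rank u - r, and c |-> (V, W_V M) is injective
   on the codewords of rank u: if two of them agree, the left kernel of their
   difference contains W_V + K, of dimension n - r, so the difference has rank
   at most r < d.  There are at most [n u] choices of V and A(m, u - r)
   full-rank (u - r) x m matrices. *)

Lemma Acount_gt0 q m j : (1 < q)%N -> (j <= m)%N -> (0 < Acount q m j)%N.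
Proof.
move=> q_gt1 le_jm; rewrite /Acount prodn_gt0 // => i.
by rewrite subn_gt0 ltn_exp2l // (leq_trans (ltn_ord i)).
Qed.

Section RowFreeCount.
Variable F : finFieldType.

Lemma row_free_col_mx m n (v : 'rV[F]_n) (A : 'M[F]_(m, n)) :
  row_free (col_mx v A) = row_free A && ~~ (v <= A)%MS.
Proof.
rewrite /row_free -addsmxE.
have [vA | nvA] := boolP (v <= A)%MS.
  rewrite (addsmx_idPr vA) andbF; apply/negbTE.
  by rewrite neq_ltn ltnS rank_leq_row.
have v_neq0 : v != 0 by apply: contraNneq nvA => ->; rewrite sub0mx.
have cap0 : \rank (v :&: A)%MS = 0%N.
  have := mxrank_leqif_sup (capmxSl v A).
  rewrite sub_capmx submx_refl (negbTE nvA).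
  by rewrite rank_rV v_neq0 => /ltn_leqif; rewrite ltnS leqn0 => /eqP.
have := mxrank_sum_cap v A; rewrite cap0 addn0 rank_rV v_neq0 => ->.
by rewrite andbT eqn_add2l.
Qed.

Lemma card_row_free m n :
  #|[pred A : 'M[F]_(m, n) | row_free A]| = Acount #|F| n m.
Proof.
elim: m => [|m IHm].
  rewrite /Acount big_ord0 (@eq_card1 _ (0 : 'M_(0, n))) // => A.
  by rewrite flatmx0 !inE /row_free mxrank.unlock !eqxx.
change (#|[pred A : 'M[F]_(1 + m, n) | row_free A]| = Acount #|F| n (1 + m)).
rewrite /Acount big_ord_recr /= -/(Acount _ n m) -{}IHm -sum1_card.
have free_dsubmx (A : 'M[F]_(1 + m, n)) : row_free A -> row_free (dsubmx A).
  by rewrite -{1}(vsubmxK A) row_free_col_mx => /andP[].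
rewrite (partition_big _ _ free_dsubmx) /=.
rewrite -sum_nat_const; apply: eq_bigr => A freeA.
rewrite (reindex (col_mx^~ A)) /=; last first.
  exists usubmx => [v _ | vA]; first by rewrite col_mxKu.
  by case/andP=> _ /eqP <-; rewrite vsubmxK.
transitivity #|~: [set w *m A | w in 'rV_m]|; last first.
  rewrite cardsCs setCK card_imset ?card_mx ?card_ord ?mul1n //.
  exact: row_free_inj.
rewrite -sum1_card; apply: eq_bigl => v.
rewrite !inE col_mxKd eqxx andbT row_free_col_mx freeA.
by congr (~~ _); apply/submxP/imsetP=> [] [w]; exists w.
Qed.

End RowFreeCount.

Section Subspaces.
Variables (F : finFieldType) (n : nat).
Implicit Types V : 'M[F]_n.

Definition row_base_prefix s V : 'M[F]_(s, n) := pid_mx s *m row_base V.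

Lemma row_base_prefix_sub s V : (row_base_prefix s V <= V)%MS.
Proof. by rewrite (submx_trans (submxMl _ _)) ?eq_row_base. Qed.

Lemma mxrank_row_base_prefix s V :
  (s <= \rank V)%N -> \rank (row_base_prefix s V) = s.
Proof. by move=> le_sV; rewrite mxrankMfree ?row_base_free ?rank_pid_mx. Qed.

Lemma eqmx_row_base_prefix u V :
  \rank V = u -> (row_base_prefix u V :=: V)%MS.
Proof.
move=> rV; apply/eqmxP; rewrite -(geq_leqif (mxrank_leqif_eq _)).
  by rewrite mxrank_row_base_prefix ?rV.
exact: row_base_prefix_sub.
Qed.

(* A subspace is represented by its canonical matrix <<V>>, so that equal
   subspaces are equal matrices. *)
Definition subspaces u : {set 'M[F]_n} :=
  [set V | (\rank V == u) && (<<V>>%MS == V)].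

Lemma card_subspaces_mul_le u :
  (#|subspaces u| * Acount #|F| u u <= Acount #|F| n u)%N.
Proof.
rewrite -!card_row_free -(cardsE [pred P : 'M[F]_u | row_free P]) -cardsX.
pose basis_of (VP : 'M[F]_n * 'M[F]_u) := VP.2 *m row_base_prefix u VP.1.
have rank_subspace V : V \in subspaces u -> \rank V = u.
  by rewrite inE => /andP[/eqP].
have eqmx_basis_of V P :
    V \in subspaces u -> row_free P -> (basis_of (V, P) :=: V)%MS.
  move=> /rank_subspace rV freeP; apply: eqmx_trans _ (eqmx_row_base_prefix rV).
  by apply: eqmxMfull; rewrite row_full_unit -row_free_unit.
rewrite -(card_in_imset (f := basis_of)); last first.
  move=> [V P] [V' P'] /setXP[/= SV freeP] /setXP[/= SV' freeP'] eqB.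
  rewrite !inE in freeP freeP'.
  have eqVV' : V = V'.
    move: (SV) (SV'); rewrite !inE => /andP[_ /eqP <-] /andP[_ /eqP <-].
    apply/genmxP/eqmxP.
    apply: eqmx_trans (eqmx_sym (eqmx_basis_of _ _ SV freeP)) _.
    by rewrite eqB; apply: eqmx_basis_of SV' freeP'.
  subst V'; congr (_, _); apply: row_free_inj eqB.
  by rewrite /row_free mxrank_row_base_prefix ?rank_subspace.
apply/subset_leq_card/subsetP => _ /imsetP[[V P] /setXP[/= SV freeP] ->].
rewrite !inE in freeP.
by rewrite inE /row_free (eqmx_basis_of _ _ SV freeP) rank_subspace.
Qed.

Lemma card_subspaces_le u : (#|subspaces u| <= gbinom #|F| n u)%N.
Proof.
rewrite /gbinom leq_divRL ?card_subspaces_mul_le // Acount_gt0 //.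
by apply/card_gt1P; exists 0, 1; rewrite !inE eq_sym oner_eq0.
Qed.

End Subspaces.

Lemma kermx_trmxS (F : fieldType) m1 m2 n
    (X : 'M[F]_(m1, n)) (Y : 'M[F]_(m2, n)) :
  (X <= Y)%MS -> (kermx Y^T <= kermx X^T)%MS.
Proof.
by case/submxP=> Z ->; rewrite sub_kermx trmx_mul mulmxA mulmx_ker mul0mx.
Qed.

Section ColumnSpace.
Variables (F : finFieldType) (n p : nat).
Implicit Types (M N : 'M[F]_(n, p)) (V : 'M[F]_n).

Definition colspace M : 'M[F]_n := <<M^T>>%MS.

Lemma mxrank_colspace M : \rank (colspace M) = \rank M.
Proof. by rewrite mxrank_gen mxrank_tr. Qed.

Lemma kermx_colspace M : (kermx M == kermx (colspace M)^T)%MS.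
Proof.
rewrite /colspace -{1 4}[M]trmxK.
by apply/andP; split; apply: kermx_trmxS; rewrite genmxE.
Qed.

Definition ker_compl s V : 'M[F]_(s, n) := row_base_prefix s (kermx V^T)^C%MS.

Lemma capmx_ker_compl s V : (ker_compl s V :&: kermx V^T <= (0 : 'M_n))%MS.
Proof.
rewrite -(capmx_compl (kermx V^T)) capmxC capmxS //; exact: row_base_prefix_sub.
Qed.

Lemma mxrank_ker_compl s M :
  (s <= \rank M)%N -> \rank (ker_compl s (colspace M)) = s.
Proof.
move=> le_sM; apply: mxrank_row_base_prefix.
rewrite mxrank_compl mxrank_ker mxrank_tr mxrank_colspace.
by have := rank_leq_row M; lia.
Qed.

Lemma mxrank_ker_compl_mul s M :
  (s <= \rank M)%N -> \rank (ker_compl s (colspace M) *m M) = s.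
Proof.
move=> le_sM; have := mxrank_mul_ker (ker_compl s (colspace M)) M.
have /mxrankS : (ker_compl s (colspace M) :&: kermx M <= (0 : 'M_n))%MS.
  apply: submx_trans (capmx_ker_compl s (colspace M)); apply: capmxS => //.
  by case/andP: (kermx_colspace M).
by rewrite mxrank0 leqn0 => /eqP->; rewrite addn0 mxrank_ker_compl.
Qed.

Lemma mxrank_sub_ker_compl s M N :
    (s <= \rank M)%N -> colspace N = colspace M ->
    ker_compl s (colspace M) *m M = ker_compl s (colspace M) *m N ->
  (\rank (M - N)%R <= \rank M - s)%N.
Proof.
move=> le_sM eqV eqW; set V := colspace M in eqV eqW.
set W := ker_compl s V in eqW *.
have K0 X : colspace X = V -> kermx V^T *m X = 0.
  by move=> <-; apply/eqP; rewrite -sub_kermx; case/andP: (kermx_colspace X).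
set K := kermx V^T in K0 *.
have /mxrankS : (W + K <= kermx (M - N))%MS.
  rewrite addsmx_sub !sub_kermx !mulmxBr eqW (K0 M) // (K0 N) //.
  by rewrite subrr sub0r oppr0 !eqxx.
have /mxrankS : (W :&: K <= (0 : 'M_n))%MS by apply: capmx_ker_compl.
have := mxrank_sum_cap W K; rewrite mxrank0 mxrank_ker_compl // !mxrank_ker.
rewrite mxrank_tr mxrank_colspace; have := rank_leq_row (M - N); lia.
Qed.

End ColumnSpace.

Lemma size_rank_code_le (F : finFieldType) (n p u r : nat)
    (S : seq 'M[F]_(n, p)) :
    uniq S -> {in S, forall M, \rank M = u} ->
    {in S &, forall M N, M != N -> (r < \rank (M - N)%R)%N} ->
  (size S <= #|subspaces F n u| * Acount #|F| p (u - r))%N.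
Proof.
move=> uniqS rankS distS; set s := (u - r)%N.
have le_sM M : M \in S -> (s <= \rank M)%N by move/rankS->; apply: leq_subr.
pose key (M : 'M[F]_(n, p)) := (colspace M, ker_compl s (colspace M) *m M).
have key_inj : {in S &, injective key}.
  move=> M N MS NS [eqV]; rewrite -eqV => eqW.
  have : (\rank (M - N)%R <= r)%N.
    rewrite (leq_trans (mxrank_sub_ker_compl (le_sM M MS) (esym eqV) eqW)) //.
    by rewrite rankS // /s; lia.
  by apply: contraTeq => /(distS M N MS NS); rewrite ltnNge.
rewrite -card_row_free -(cardsE [pred A : 'M[F]_(s, p) | row_free A]) -cardsX.
rewrite -(size_map key) -(card_uniqP _); last by rewrite map_inj_in_uniq.
apply/subset_leq_card/subsetP => _ /mapP[M MS ->].
rewrite !inE mxrank_colspace rankS // genmx_id !eqxx /=.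
by rewrite /row_free mxrank_ker_compl_mul ?le_sM.
Qed.

Section CoordinateMatrix.
Variables (F : finFieldType) (L : fieldExtType F) (n : nat).
Implicit Types x y : 'rV[L]_n.

Definition coord_mx x : 'M[F]_(n, dim L) := \matrix_i v2r (x ord0 i).

Lemma coord_mxB x y : coord_mx (x - y) = coord_mx x - coord_mx y.
Proof. by apply/matrixP => i j; rewrite !mxE linearB /= !mxE. Qed.

Lemma coord_mx_inj : injective coord_mx.
Proof.
move=> x y /matrixP eq_xy; apply/rowP => i; apply: v2r_inj.
by apply/rowP => j; have := eq_xy i j; rewrite !mxE.
Qed.

Lemma rk_coord_mx x : rk x = \rank (coord_mx x).
Proof.
rewrite /rk unlock /= /dimv mxrank_gen; apply/eqmx_rank/andP.
set X := [seq x ord0 i | i <- enum 'I_n].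
split; apply/row_subP => i; rewrite rowK.
  have /mapP[j _ ->] := mem_tnth i (in_tuple X).
  by apply: (eq_row_sub j); rewrite rowK.
have /tnthP[j ->] : x ord0 i \in in_tuple X by apply: map_f; rewrite mem_enum.
by apply: (eq_row_sub j); rewrite rowK.
Qed.

End CoordinateMatrix.

Theorem lemma6 (F : finFieldType) (L : fieldExtType F) (m n k : nat)
  (C : seq 'rV[L]_n) :
  \dim {:L} = m ->
  (n <= m)%N ->
  (1 <= k <= n)%N ->
  uniq C ->
  size C = (#|F| ^ (m * k))%N ->
  (forall c d, c \in C -> d \in C -> c != d -> (n - k + 1 <= rk (c - d))%N) ->
  (exists c d, [/\ c \in C, d \in C, c != d & rk (c - d) = (n - k + 1)%N]) ->
  forall u : nat, (n - k + 1 <= u <= n)%N ->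
    (weight_count C u <= gbinom #|F| n u * Acount #|F| m (u - (n - k)))%N.
Proof.
move=> dimL _ _ uniqC _ distC _ u _.
have -> : weight_count C u =
    size (map (@coord_mx F L n) [seq c <- C | rk c == u]).
  by rewrite size_map size_filter.
rewrite -dimL dimvf.
apply: leq_trans (leq_mul (card_subspaces_le F n u) (leqnn _)).
apply: size_rank_code_le.
- by rewrite map_inj_uniq ?filter_uniq //; apply: coord_mx_inj.
- by move=> _ /mapP[c + ->]; rewrite mem_filter rk_coord_mx => /andP[/eqP].
move=> _ _ /mapP[c + ->] /mapP[d + ->].
rewrite !mem_filter => /andP[_ cC] /andP[_ dC] neq_cd.
rewrite -coord_mxB -rk_coord_mx -addn1; apply: distC => //.
by apply: contraNneq neq_cd => ->.
Qed.
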